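(* Let $h$ be a positive, non-decreasing, continuously differentiable function with $h(u)\to\infty$ and $uh'(u)/h(u)\to0$ as $u\to\infty$. Let $g(u)=h(u)/(uh'(u))$ and $$v(u)=\min\left(\log u,\ \min_{\log u\le t\le\log^2 u}g(t)\right).$$ Then $v(u)\to\infty$ as $u\to\infty$, and $$h(v(u)\log u)=(1+o(1))\,h(\log u)\quad\text{as } u\to\infty.$$
   Context: $\log^2u$ means $(\log u)^2$. *)

From Stdlib Require Import Reals.
From Coquelicot Require Import Coquelicot.
Open Scope R_scope.

(* g(t) = h(t) / (t h'(t)).  Only used where h'(t) > 0; where h'(t) = 0 the
   value of g is +infinity (see [v_set] below). *)
Definition gfun (h : R -> R) (t : R) : R := h t / (t * Derive h t).

(* The set  { log u } U { g(t) : log u <= t <= (log u)^2 , h'(t) > 0 }.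
   Points with h'(t) = 0 have g(t) = +oo and so do not affect the minimum. *)
Definition v_set (h : R -> R) (u : R) : R -> Prop :=
  fun y => y = ln u \/
    exists t, ln u <= t <= (ln u) ^ 2 /\ 0 < Derive h t /\ y = gfun h t.

(* v(u) = min( log u , min_{log u <= t <= log^2 u} g(t) ), realised as the
   infimum of [v_set h u] (it is attained for large u). *)
Definition vfun (h : R -> R) (u : R) : R := real (Glb_Rbar (v_set h u)).

(** The hypothesis [u h'(u) / h(u) -> 0] says that g tends to infinity, so the
    minimum v(u) of [log u] and of g over [[log u, log^2 u]] tends to infinity
    as well.  Put [L = log u] and [v = v(u)].  On [[L, v L]], a subinterval of
    [[L, L^2]], we have [t h'(t) <= h(t) / v], i.e. [log h(t) - (log t) / v] is
    non-increasing, whence [1 <= h(v L) / h(L) <= v^(1/v)], and [v^(1/v) -> 1]. *)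
From Stdlib Require Import Reals Lra.
From Coquelicot Require Import Coquelicot.
Open Scope R_scope.

Lemma Glb_Rbar_real_bounds (E : R -> Prop) (a M : R) :
  E a -> (forall y, E y -> M <= y) ->
  M <= real (Glb_Rbar E) /\ forall y, E y -> real (Glb_Rbar E) <= y.
Proof.
  intros Ea HM.
  destruct (Glb_Rbar_correct E) as [lb glb].
  assert (HMglb : Rbar_le M (Glb_Rbar E)) by (apply glb; exact HM).
  pose proof (lb a Ea) as Hglb_le_a.
  destruct (Glb_Rbar E) as [r | |]; simpl in *; try contradiction.
  split; [exact HMglb | exact lb].
Qed.

Lemma is_derive_nonpos_le (f df : R -> R) (a b : R) :
  a <= b ->
  (forall x, a <= x <= b -> is_derive f x (df x)) ->
  (forall x, a <= x <= b -> df x <= 0) ->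
  f b <= f a.
Proof.
  intros Hab Hder Hneg.
  destruct (MVT_gen f a b df) as [c [Hc Hmvt]].
  - intros x Hx; rewrite Rmin_left, Rmax_right in Hx by lra.
    apply Hder; lra.
  - intros x Hx; rewrite Rmin_left, Rmax_right in Hx by lra.
    apply continuity_pt_filterlim.
    exact (@ex_derive_continuous R_AbsRing R_NormedModule f x (ex_intro _ _ (Hder x Hx))).
  - rewrite Rmin_left, Rmax_right in Hc by lra.
    assert (df c * (b - a) <= 0) by (apply Rmult_le_0_r; [apply Hneg | lra]; lra).
    lra.
Qed.

Lemma is_lim_Rpower_inv_self : is_lim (fun y => Rpower y (/ y)) p_infty 1.
Proof.
  apply (is_lim_ext (fun y => exp (ln y / y))).
  { intros y; unfold Rpower, Rdiv; now rewrite Rmult_comm. }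
  rewrite <- exp_0.
  apply (is_lim_comp_continuous (fun y => ln y / y) exp p_infty 0).
  - exact is_lim_div_ln_p.
  - apply continuous_exp.
Qed.

Lemma gfun_eq_inv (h : R -> R) (t : R) :
  gfun h t = / (t * Derive h t / h t).
Proof. unfold gfun; now rewrite Rinv_div. Qed.

Section SlowlyVarying.

Variable h : R -> R.
Hypothesis h_pos : forall x, 0 < x -> 0 < h x.
Hypothesis h_diff : forall x, 0 < x -> ex_derive h x.

Lemma t_Derive_le_of_le_gfun (c t : R) :
  0 < c -> 0 < t -> 0 < Derive h t -> c <= gfun h t ->
  t * Derive h t <= / c * h t.
Proof.
  intros Hc Ht Hd Hg.
  pose proof (h_pos t Ht) as Hh.
  assert (Hx : 0 < t * Derive h t / h t)
    by (apply Rdiv_lt_0_compat; [apply Rmult_lt_0_compat|]; assumption).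
  rewrite gfun_eq_inv in Hg.
  apply Rinv_le_contravar in Hg; [|exact Hc].
  rewrite Rinv_inv in Hg.
  apply Rle_div_l in Hg; lra.
Qed.

Lemma h_ratio_le_Rpower (a b c : R) :
  0 < a <= b ->
  (forall t, a <= t <= b -> t * Derive h t <= c * h t) ->
  h b / h a <= Rpower (b / a) c.
Proof.
  intros Hab Hslope.
  set (F t := ln (h t) - c * ln t).
  assert (HF : F b <= F a).
  { apply (is_derive_nonpos_le F (fun t => Derive h t / h t - c / t)); [lra | |].
    - intros t Ht.
      pose proof (h_pos t ltac:(lra)); pose proof (h_diff t ltac:(lra)).
      unfold F; auto_derive; [repeat split; auto; lra |].
      change (Derive (fun x => h x) t) with (Derive h t); field; lra.
    - intros t Ht.
      pose proof (h_pos t ltac:(lra)) as Hh.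
      specialize (Hslope t Ht).
      replace (Derive h t / h t - c / t)
        with ((t * Derive h t - c * h t) / (t * h t)) by (field; lra).
      apply Rle_div_l; [apply Rmult_lt_0_compat; lra | lra]. }
  pose proof (h_pos a ltac:(lra)); pose proof (h_pos b ltac:(lra)).
  assert (Hln : ln (h b / h a) <= c * ln (b / a)).
  { unfold F in HF; rewrite !ln_div by lra; lra. }
  rewrite <- (exp_ln (h b / h a)) by (apply Rdiv_lt_0_compat; lra).
  unfold Rpower.
  destruct Hln as [Hlt | Heq]; [left; now apply exp_increasing | right; now rewrite Heq].
Qed.

Lemma h_ratio_le_of_v_set_lower_bound (u v : R) :
  0 < ln u -> 1 <= v <= ln u -> (forall y, v_set h u y -> v <= y) ->
  h (v * ln u) / h (ln u) <= Rpower v (/ v).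
Proof.
  intros HL Hv Hlow.
  replace v with (v * ln u / ln u) at 2 by (field; lra).
  apply h_ratio_le_Rpower; [nra |].
  intros t Ht.
  pose proof (h_pos t ltac:(lra)).
  destruct (Rle_or_lt (Derive h t) 0) as [Hd | Hd].
  - assert (0 <= / v * h t) by (apply Rmult_le_pos; [left; apply Rinv_0_lt_compat|]; lra).
    assert (t * Derive h t <= 0) by (apply Rmult_le_0_l; lra).
    lra.
  - apply t_Derive_le_of_le_gfun; [lra | lra | exact Hd |].
    apply Hlow; right; exists t; repeat split; try lra.
    simpl; nra.
Qed.

Hypothesis h_slow : is_lim (fun u => u * Derive h u / h u) p_infty 0.

Lemma gfun_eventually_ge (K : R) :
  0 < K -> exists T, forall t, T < t -> 0 < Derive h t -> K <= gfun h t.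
Proof.
  intros HK.
  destruct (proj2 (is_lim_spec _ _ _) h_slow (mkposreal (/ K) (Rinv_0_lt_compat K HK)))
    as [T HT]; simpl in HT.
  exists (Rmax T 0); intros t Ht Hd.
  pose proof (Rmax_l T 0); pose proof (Rmax_r T 0).
  specialize (HT t ltac:(lra)).
  assert (Hx : 0 < t * Derive h t / h t)
    by (apply Rdiv_lt_0_compat; [apply Rmult_lt_0_compat | apply h_pos]; lra).
  rewrite Rminus_0_r, Rabs_pos_eq in HT by lra.
  rewrite gfun_eq_inv, <- (Rinv_inv K).
  left; apply Rinv_lt_contravar; [| exact HT].
  apply Rmult_lt_0_compat; [exact Hx | now apply Rinv_0_lt_compat].
Qed.

Lemma v_set_eventually_ge (K : R) :
  0 < K -> exists T, forall u, T < ln u -> forall y, v_set h u y -> K <= y.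
Proof.
  intros HK.
  destruct (gfun_eventually_ge K HK) as [T HT].
  exists (Rmax T K); intros u Hu y [-> | [t [Ht [Hd ->]]]].
  - pose proof (Rmax_r T K); lra.
  - apply HT; [pose proof (Rmax_l T K); lra | exact Hd].
Qed.

Lemma vfun_eventually (M : R) :
  exists N, forall u, N < u ->
    0 < ln u /\ M <= vfun h u /\ vfun h u <= ln u /\
    (forall y, v_set h u y -> vfun h u <= y).
Proof.
  assert (HK : 0 < Rmax M 1) by (pose proof (Rmax_r M 1); lra).
  destruct (v_set_eventually_ge (Rmax M 1) HK) as [T HT].
  exists (exp T); intros u Hu.
  assert (HTu : T < ln u).
  { rewrite <- (ln_exp T); apply ln_increasing; [apply exp_pos | exact Hu]. }
  assert (Hln : v_set h u (ln u)) by now left.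
  destruct (Glb_Rbar_real_bounds (v_set h u) (ln u) (Rmax M 1) Hln (HT u HTu))
    as [HMv Hv].
  pose proof (HT u HTu _ Hln); pose proof (Rmax_l M 1).
  unfold vfun; repeat split; auto; lra.
Qed.

End SlowlyVarying.

Theorem lemma6p3 (h : R -> R)
  (h_pos : forall x, 0 < x -> 0 < h x)
  (h_mono : forall x y, 0 < x -> x <= y -> h x <= h y)
  (h_diff : forall x, 0 < x -> ex_derive h x)
  (h_C1 : forall x, 0 < x -> continuous (Derive h) x)
  (h_inf : is_lim h p_infty p_infty)
  (h_slow : is_lim (fun u => u * Derive h u / h u) p_infty 0) :
  is_lim (vfun h) p_infty p_infty /\
  is_lim (fun u => h (vfun h u * ln u) / h (ln u)) p_infty 1.
Proof.
  (* Differentiability suffices for the mean value argument, and [v -> oo]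
     follows from [h_slow] alone, so [h_C1] and [h_inf] are not needed. *)
  assert (Hv : is_lim (vfun h) p_infty p_infty).
  { apply is_lim_spec; intros M.
    destruct (vfun_eventually h h_pos h_slow (M + 1)) as [N HN].
    exists N; intros u Hu; destruct (HN u Hu) as [_ [HMv _]]; lra. }
  split; [exact Hv |].
  apply (is_lim_le_le_loc (fun _ => 1) (fun u => Rpower (vfun h u) (/ vfun h u))).
  - destruct (vfun_eventually h h_pos h_slow 1) as [N HN].
    exists N; intros u Hu.
    destruct (HN u Hu) as [HL [Hv1 [HvL Hlow]]].
    split.
    + apply Rle_div_r; [now apply h_pos |].
      rewrite Rmult_1_l; apply h_mono; nra.
    + now apply h_ratio_le_of_v_set_lower_bound.
  - apply is_lim_const.
  - apply (is_lim_comp _ _ _ _ _ is_lim_Rpower_inv_self Hv).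
    exists 0; intros u _; discriminate.
Qed.
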